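(* Let $g_c:[0,\infty)\to[0,\infty)$ be a measurable function with $0<K:=\int_0^\infty g_c(u)\,\mathrm{d}u<\infty$, let $\mu_1,\mu_2\in\mathbb{R}$, $\sigma>0$, $0<\rho<1$, $\boldsymbol{\mu}=(\mu_1,\mu_2)^\top$ and $\boldsymbol{\Sigma}=\begin{pmatrix}\sigma^2&\rho\sigma\\ \rho\sigma&1\end{pmatrix}$. Suppose $(Y^*,U^* )^\top$ has PDF $$f(\boldsymbol{y})=\frac{1}{|\boldsymbol{\Sigma}|^{1/2}\,\pi K}\,g_c\big((\boldsymbol{y}-\boldsymbol{\mu})^\top\boldsymbol{\Sigma}^{-1}(\boldsymbol{y}-\boldsymbol{\mu})\big),\qquad \boldsymbol{y}\in\mathbb{R}^2,$$ and $\mathbb{P}(U^*>0)>0$. Then the PDF of $Y^*$ conditional on $U^*>0$ is $$f_{Y^*\mid U^*>0}(y)=\frac{\rho\sqrt{1-\rho^2}}{\sigma}\,\frac{\int_{-\infty}^{z(y)} g_c\Big(\big(\frac{y-\mu_1}{\sigma}\big)^2+w^2\Big)\,\mathrm{d}w}{\int_{-\mu_2}^{\infty}\Big\{\int_{-\infty}^{\infty} g_c\Big(\big(\frac{x}{\rho}\big)^2+\big(\frac{u-x}{\sqrt{1-\rho^2}}\big)^2\Big)\,\mathrm{d}x\Big\}\,\mathrm{d}u},\qquad y\in\mathbb{R},$$ where $z(y)=\frac{\mu_2}{\sqrt{1-\rho^2}}+\frac{\rho}{\sqrt{1-\rho^2}}\,\frac{y-\mu_1}{\sigma}$.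
   Context: The distribution of $(Y^*,U^* )^\top$ is the bivariate symmetric distribution with location $\boldsymbol{\mu}$, scale matrix $\boldsymbol{\Sigma}$ and density generator $g_c$; $|\boldsymbol{\Sigma}|=\sigma^2(1-\rho^2)$. *)

From HB Require Import structures.
From mathcomp Require Import all_boot all_order all_algebra.
From mathcomp Require Import all_classical all_reals all_analysis.
Set Implicit Arguments. Unset Strict Implicit. Unset Printing Implicit Defensive.
Import Order.TTheory GRing.Theory Num.Theory.
Local Open Scope ring_scope.

Definition Sigma (R : realType) (sigma rho : R) : 'M[R]_2 :=
  \matrix_(i < 2, j < 2)
    (if (i == 0) && (j == 0) then sigma ^+ 2
     else if (i == 1) && (j == 1) then 1
     else rho * sigma).

Definition vec2 (R : realType) (p : R * R) : 'rV[R]_2 :=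
  \row_(i < 2) (if i == 0 then p.1 else p.2).

Definition qform (R : realType) (S : 'M[R]_2) (mu y : R * R) : R :=
  let v := vec2 (y.1 - mu.1, y.2 - mu.2) in
  (v *m invmx S *m v^T) 0 0.

Definition biv_sym_pdf (R : realType) (g : R -> R) (K : R)
  (mu : R * R) (sigma rho : R) (y : R * R) : R :=
  (Num.sqrt (\det (Sigma sigma rho)) * pi * K)^-1
    * g (qform (Sigma sigma rho) mu y).

Definition zfun (R : realType) (mu1 mu2 sigma rho y : R) : R :=
  mu2 / Num.sqrt (1 - rho ^+ 2)
  + rho / Num.sqrt (1 - rho ^+ 2) * ((y - mu1) / sigma).

Local Open Scope ereal_scope.

Definition cond_pdf (R : realType) (g : R -> R)
  (mu1 mu2 sigma rho : R) (y : R) : \bar R :=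
  ((rho * Num.sqrt (1 - rho ^+ 2) / sigma)%R)%:E
  * (\int[@lebesgue_measure R]_(w in `]-oo, zfun mu1 mu2 sigma rho y]%classic)
        (g (((y - mu1) / sigma) ^+ 2 + w ^+ 2)%R)%:E)
  / (\int[@lebesgue_measure R]_(u in `](- mu2)%R, +oo[%classic)
        (\int[@lebesgue_measure R]_(x in [set: R])
           (g ((x / rho) ^+ 2 + ((u - x) / Num.sqrt (1 - rho ^+ 2)) ^+ 2)%R)%:E)).

From HB Require Import structures.
From mathcomp Require Import all_boot all_order all_algebra.
From mathcomp Require Import all_classical all_reals all_analysis.
From mathcomp Require Import ring lra measurable_realfun.
Import Order.TTheory GRing.Theory Num.Theory.
Set Implicit Arguments. Unset Strict Implicit. Unset Printing Implicit Defensive.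
Local Open Scope classical_set_scope.
Local Open Scope ring_scope.

(* Completing the square in u, the quadratic form of Sigma is
   ((y - mu1)/sigma)^2 + ((u - mu2) - rho (y - mu1)/sigma)^2 / (1 - rho^2), and
   |Sigma|^(1/2) = sigma sqrt(1 - rho^2); so the joint density is c g(...) for a
   constant c that cancels from the conditional probability.  Both events are
   preimages under (Y, U) of rectangles, A x (0, oo) and R x (0, oo), hence by
   Tonelli their probabilities are iterated integrals.  In the numerator,
   integrating first in u, the substitution
   u = mu2 + rho (y - mu1)/sigma - sqrt(1 - rho^2) w maps {w < z(y)} onto {u > 0}
   and contributes the factor sqrt(1 - rho^2).  In the denominator, integrating
   first in y, the substitution y = mu1 + sigma x / rho contributes sigma / rho,
   and the shift u -> u + mu2 yields the double integral of the statement, which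
   is finite and positive because 0 < P(U* > 0) <= 1. *)

Definition std_qform (R : realType) (mu1 mu2 sigma rho y u : R) : R :=
  ((y - mu1) / sigma) ^+ 2
  + ((u - mu2) - rho * ((y - mu1) / sigma)) ^+ 2 / (1 - rho ^+ 2).

Section scale_matrix.
Variables (R : realType) (sigma rho : R).

Lemma det_Sigma : \det (Sigma sigma rho) = sigma ^+ 2 * (1 - rho ^+ 2).
Proof.
rewrite (expand_det_row _ 0) !big_ord_recr big_ord0 /= /cofactor !det_mx11 !mxE /=.
by rewrite /bump /= ?mxE /= expr0 expr1; ring.
Qed.

Hypotheses (sigma_neq0 : sigma != 0) (rho2_neq1 : rho ^+ 2 != 1).

Lemma invmx_Sigma : invmx (Sigma sigma rho) =
  (sigma ^+ 2 * (1 - rho ^+ 2))^-1 *: \matrix_(i < 2, j < 2)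
    (if (i == 0) && (j == 0) then 1
     else if (i == 1) && (j == 1) then sigma ^+ 2
     else - (rho * sigma)).
Proof.
have oneBrho2_neq0 : 1 - rho ^+ 2 != 0 by rewrite subr_eq0 eq_sym.
have Sigma_unit : Sigma sigma rho \in unitmx.
  by rewrite unitmxE det_Sigma unitfE mulf_neq0 ?expf_neq0.
set M := (X in _ = X).
have Sigma_M : Sigma sigma rho *m M = 1%:M.
  apply/matrixP => i j; rewrite /M !mxE !big_ord_recr big_ord0 /= !mxE.
  case: i => [[|[|i]] ?] //; case: j => [[|[|j]] ?] //=;
    by field; rewrite sigma_neq0 oneBrho2_neq0.
by rewrite -[LHS]mulmx1 -Sigma_M mulKmx.
Qed.

Lemma qform_Sigma (mu1 mu2 : R) (p : R * R) :
  qform (Sigma sigma rho) (mu1, mu2) p = std_qform mu1 mu2 sigma rho p.1 p.2.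
Proof.
have oneBrho2_neq0 : 1 - rho ^+ 2 != 0 by rewrite subr_eq0 eq_sym.
rewrite /qform invmx_Sigma !mxE !big_ord_recr !big_ord0 /= !mxE.
rewrite !big_ord_recr !big_ord0 /= !mxE /=.
by rewrite /std_qform; field; rewrite sigma_neq0 oneBrho2_neq0.
Qed.

End scale_matrix.

Lemma biv_sym_pdfE (R : realType) (g : R -> R) (K mu1 mu2 sigma rho : R)
    (p : R * R) : 0 < sigma -> rho ^+ 2 < 1 ->
  biv_sym_pdf g K (mu1, mu2) sigma rho p =
  (sigma * Num.sqrt (1 - rho ^+ 2) * pi * K)^-1
    * g (std_qform mu1 mu2 sigma rho p.1 p.2).
Proof.
move=> sigma_gt0 rho2_lt1.
rewrite /biv_sym_pdf qform_Sigma ?(gt_eqF sigma_gt0) ?(lt_eqF rho2_lt1) //.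
by rewrite det_Sigma sqrtrM ?sqr_ge0 // sqrtr_sqr gtr0_norm.
Qed.

Section affine_change_of_variables.
Local Open Scope ereal_scope.
Variables (R : realType) (a b : R).
Hypothesis a_neq0 : a != 0%R.
Local Notation mu := (@lebesgue_measure R).

Lemma measurable_affine :
  measurable_fun [set: measurableTypeR R] (fun x => a * x + b : measurableTypeR R)%R.
Proof. by apply: measurable_funD => //; exact: measurable_funM. Qed.

Lemma lebesgue_measure_affine A : measurable A ->
  mu A = `|a|%:E * mu ((fun x => a * x + b)%R @^-1` A).
Proof.
move=> mA; rewrite -[RHS]/(pushforward (mscale (NngNum (normr_ge0 a)) mu)
  (fun x : measurableTypeR R => a * x + b : measurableTypeR R)%R A).
apply: lebesgue_measure_unique => //; first exact: measurable_affine.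
move=> mphi _ /ocitvP [->|[[c d] /= cd ->]]; first by rewrite !measure0.
rewrite /pushforward /mscale /=.
have /orP[a_lt0|a_gt0] := lt_total a_neq0.
- have -> : (fun x => a * x + b)%R @^-1` `]c, d] =
      `[((d - b) / a)%R, ((c - b) / a)%R[%classic.
    by apply/seteqP; split => x /=; rewrite !in_itv /= ltr_ndivlMr // ler_ndivrMr //;
      move=> /andP[? ?]; apply/andP; split; lra.
  rewrite !lebesgue_measure_itv /= !lte_fin cd ltr_nM2r ?invr_lt0 // ltrD2r cd.
  by rewrite -EFinM ltr0_norm //; congr EFin; field; rewrite lt_eqF.
- have -> : (fun x => a * x + b)%R @^-1` `]c, d] =
      `]((c - b) / a)%R, ((d - b) / a)%R]%classic.
    by apply/seteqP; split => x /=; rewrite !in_itv /= ltr_pdivrMr // ler_pdivlMr //;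
      move=> /andP[? ?]; apply/andP; split; lra.
  rewrite !lebesgue_measure_itv /= !lte_fin cd ltr_pM2r ?invr_gt0 // ltrD2r cd.
  by rewrite -EFinM gtr0_norm //; congr EFin; field; rewrite gt_eqF.
Qed.

Lemma ge0_integral_affine (h : R -> \bar R) (E : set R) :
  measurable E -> measurable_fun setT h -> (forall x, 0 <= h x) ->
  \int[mu]_(x in E) h x =
  `|a|%:E * \int[mu]_(w in (fun w => a * w + b)%R @^-1` E) h (a * w + b)%R.
Proof.
move=> mE mh h0.
have mphi := measurable_affine.
have mphiE : measurable ((fun w => a * w + b)%R @^-1` E).
  by rewrite -[X in measurable X]setTI; exact: mphi.
rewrite -ge0_integral_mscale //; last exact/measurable_funTS/measurableT_comp.
rewrite -(ge0_integral_pushforward mphi) //; last exact: measurable_funS mh.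
apply: eq_measure_integral => A mA _.
exact: lebesgue_measure_affine.
Qed.

End affine_change_of_variables.

Lemma ge0_integral_itvy_shift (R : realType) (h : R -> \bar R) (b c : R) :
  measurable_fun setT h -> (forall x, (0 <= h x)%E) ->
  (\int[lebesgue_measure]_(x in `]c, +oo[) h (x - b)%R
   = \int[lebesgue_measure]_(x in `](c - b)%R, +oo[) h x)%E.
Proof.
move=> mh h0; rewrite [RHS](ge0_integral_affine (- b) (oner_neq0 R)) //.
rewrite normr1 mul1e; under [RHS]eq_integral do rewrite mul1r.
congr integral; apply/seteqP; split => x /=; rewrite !in_itv /= !andbT mul1r ltrD2r //.
Qed.

Section tonelli_setX.
Local Open Scope ereal_scope.
Context d1 d2 (T1 : measurableType d1) (T2 : measurableType d2) (R : realType).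
Variables (m1 : {sigma_finite_measure set T1 -> \bar R})
  (m2 : {sigma_finite_measure set T2 -> \bar R}).
Variables (f : T1 * T2 -> \bar R) (A : set T1) (B : set T2).
Hypotheses (mf : measurable_fun setT f) (f0 : forall p, 0 <= f p)
  (mA : measurable A) (mB : measurable B).

Let mfAB : measurable_fun setT (f \_ (A `*` B)).
Proof.
by apply/(measurable_restrictT _ _).1; [exact: measurableX | exact: measurable_funS mf].
Qed.

Let fAB_ge0 p : 0 <= (f \_ (A `*` B)) p.
Proof. by rewrite patchE; case: ifP. Qed.

Lemma ge0_integral_setX1 :
  \int[m1 \x m2]_(p in A `*` B) f p = \int[m1]_(x in A) \int[m2]_(y in B) f (x, y).
Proof.
rewrite integral_mkcond fubini_tonelli1 // [RHS]integral_mkcond.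
apply: eq_integral => x _; rewrite /fubini_F patchE; case: ifPn => xA.
  rewrite [RHS]integral_mkcond; apply: eq_integral => y _.
  by rewrite !patchE in_setX xA.
rewrite -[RHS](integral0 m2 setT); apply: eq_integral => y _.
by rewrite patchE in_setX (negbTE xA).
Qed.

Lemma ge0_integral_setX2 :
  \int[m1 \x m2]_(p in A `*` B) f p = \int[m2]_(y in B) \int[m1]_(x in A) f (x, y).
Proof.
rewrite integral_mkcond fubini_tonelli2 // [RHS]integral_mkcond.
apply: eq_integral => y _; rewrite /fubini_G patchE; case: ifPn => yB.
  rewrite [RHS]integral_mkcond; apply: eq_integral => x _.
  by rewrite !patchE in_setX yB andbT.
rewrite -[RHS](integral0 m1 setT); apply: eq_integral => x _.
by rewrite patchE in_setX (negbTE yB) andbF.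
Qed.

End tonelli_setX.

Ltac solve_measurable_arith := repeat (apply: measurable_funD || apply: measurable_funM
  || apply: measurable_funB || apply: measurable_funX || apply: measurable_funN
  || apply: measurable_cst || apply: measurable_id
  || apply: measurable_fst || apply: measurable_snd).

Section conditional_density.
Local Open Scope ereal_scope.
Variables (R : realType) (g : R -> R) (mu1 mu2 sigma rho : R).
Hypotheses (mg : measurable_fun `[(0 : R)%R, +oo[ g)
  (g_ge0 : forall u, (0 <= u)%R -> (0 <= g u)%R)
  (sigma_gt0 : (0 < sigma)%R) (rho_gt0 : (0 < rho)%R) (rho_lt1 : (rho < 1)%R).
Local Notation mu := (@lebesgue_measure R).
Local Notation s := (Num.sqrt (1 - rho ^+ 2)).
Local Notation Q := (std_qform mu1 mu2 sigma rho).

Definition marginal_kernel (v : R) : \bar R :=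
  \int[mu]_(x in [set: R]) (g ((x / rho) ^+ 2 + ((v - x) / s) ^+ 2))%:E.

Let oneBrho2_gt0 : (0 < 1 - rho ^+ 2)%R.
Proof. by rewrite subr_gt0 expr2 mulr_ilt1 // ltW. Qed.

Let s_gt0 : (0 < s)%R.
Proof. by rewrite sqrtr_gt0. Qed.

Let s_sqr : (s ^+ 2 = 1 - rho ^+ 2)%R.
Proof. by rewrite sqr_sqrtr // ltW. Qed.

Lemma measurable_g_comp d (T : measurableType d) (D : set T) (h : T -> R) :
  measurable D -> measurable_fun D h -> (forall x, D x -> (0 <= h x)%R) ->
  measurable_fun D (fun x => (g (h x))%:E).
Proof.
move=> mD mh h_ge0; apply/measurable_EFinP.
apply: (measurable_comp (F := `[(0 : R)%R, +oo[%classic)) => //.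
by move=> _ [x Dx <-]; rewrite /= in_itv /= andbT h_ge0.
Qed.

Let sqrD_ge0 (x y : R) : (0 <= x ^+ 2 + y ^+ 2)%R.
Proof. by rewrite addr_ge0 ?sqr_ge0. Qed.

Lemma std_qform_ge0 y u : (0 <= Q y u)%R.
Proof. by rewrite addr_ge0 ?sqr_ge0 // divr_ge0 ?sqr_ge0 // ltW. Qed.

Lemma measurable_g_std_qform d (T : measurableType d) (h1 h2 : T -> R) :
  measurable_fun setT h1 -> measurable_fun setT h2 ->
  measurable_fun setT (fun t => (g (Q (h1 t) (h2 t)))%:E).
Proof.
move=> mh1 mh2; apply: measurable_g_comp => // [|t _]; last exact: std_qform_ge0.
by rewrite /std_qform; solve_measurable_arith.
Qed.

Lemma measurable_density : measurable_fun setT (fun p : R * R => (g (Q p.1 p.2))%:E).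
Proof. exact: measurable_g_std_qform. Qed.

Let density_ge0 y u : 0 <= (g (Q y u))%:E.
Proof. by rewrite lee_fin g_ge0 ?std_qform_ge0. Qed.

Lemma marginal_kernel_ge0 v : 0 <= marginal_kernel v.
Proof. by apply: integral_ge0 => x _; rewrite lee_fin g_ge0. Qed.

Lemma measurable_marginal_kernel : measurable_fun setT marginal_kernel.
Proof.
pose k (p : R * R) := (g ((p.1 / rho) ^+ 2 + ((p.2 - p.1) / s) ^+ 2))%:E.
have mk : measurable_fun setT k.
  by apply: measurable_g_comp => //; solve_measurable_arith.
have k_ge0 p : 0 <= k p by rewrite lee_fin g_ge0.
exact: (@measurable_fun_fubini_tonelli_G _ _ _ _ R mu _ mk k_ge0).
Qed.

Lemma measurable_integral_density_u_gt0 :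
  measurable_fun setT (fun y => \int[mu]_(u in `]0%R, +oo[) (g (Q y u))%:E).
Proof.
set G := (fun p : R * R => (g (Q p.1 p.2))%:E) \_ (setT `*` `]0%R, +oo[).
have mG : measurable_fun setT G.
  apply/(measurable_restrictT _ _).1; first exact: measurableX.
  exact: measurable_funS measurable_density.
have G_ge0 p : 0 <= G p by rewrite /G patchE; case: ifP.
have := @measurable_fun_fubini_tonelli_F _ _ _ _ R mu _ mG G_ge0.
congr measurable_fun; apply/funext => y.
rewrite /fubini_F [RHS]integral_mkcond; apply: eq_integral => u _.
by rewrite /G !patchE in_setX in_setT.
Qed.

Lemma integral_density_u_gt0 y :
  \int[mu]_(u in `]0%R, +oo[) (g (Q y u))%:E =
  s%:E * \int[mu]_(w in `]-oo, zfun mu1 mu2 sigma rho y])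
           (g (((y - mu1) / sigma) ^+ 2 + w ^+ 2))%:E.
Proof.
set x := ((y - mu1) / sigma)%R.
have s_neq0 : (- s != 0)%R by rewrite oppr_eq0 gt_eqF.
have mQ_affine : measurable_fun setT (fun w => (g (Q y (- s * w + (mu2 + rho * x))))%:E).
  by apply: measurable_g_std_qform; solve_measurable_arith.
rewrite (ge0_integral_affine (mu2 + rho * x) s_neq0) //; last first.
  by apply: measurable_g_std_qform; solve_measurable_arith.
rewrite normrN gtr0_norm //; congr (_ * _).
have -> : (fun w => - s * w + (mu2 + rho * x))%R @^-1` `]0%R, +oo[ =
    `]-oo, zfun mu1 mu2 sigma rho y[%classic.
  have zE : zfun mu1 mu2 sigma rho y = ((mu2 + rho * x) / s)%R.
    by rewrite /zfun -/x; field; rewrite gt_eqF.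
  apply/seteqP; split => w /=; rewrite !in_itv /= andbT zE ltr_pdivlMr //; nra.
rewrite integral_itv_bndo_bndc; last exact: measurable_funTS.
apply: eq_integral => w _; congr (g _)%:E; rewrite /std_qform -/x; congr (_ + _)%R.
by rewrite -[X in (_ / X)%R = _]s_sqr; field; rewrite gt_eqF.
Qed.

Lemma integral_density_y u :
  \int[mu]_(y in [set: R]) (g (Q y u))%:E = (sigma / rho)%:E * marginal_kernel (u - mu2).
Proof.
have sr_neq0 : (sigma / rho != 0)%R by rewrite mulf_neq0 ?invr_eq0 ?gt_eqF.
rewrite (ge0_integral_affine mu1 sr_neq0) //; last first.
  by apply: measurable_g_std_qform; solve_measurable_arith.
rewrite gtr0_norm ?divr_gt0 // preimage_setT; congr (_ * _).
apply: eq_integral => x _; congr (g _)%:E; rewrite /std_qform.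
by rewrite -[X in (_ + _ / X)%R = _]s_sqr; field; rewrite !gt_eqF.
Qed.

Lemma integral_cond_pdf (A : set R) : measurable A ->
  \int[mu]_(y in A) cond_pdf g mu1 mu2 sigma rho y =
  ((rho / sigma)%:E * (\int[mu]_(v in `](- mu2)%R, +oo[) marginal_kernel v)^-1)
  * \int[mu]_(y in A) \int[mu]_(u in `]0%R, +oo[) (g (Q y u))%:E.
Proof.
move=> mA; rewrite -ge0_integralZl //; last first.
- apply: mule_ge0; first by rewrite lee_fin divr_ge0 ?ltW.
  by rewrite inve_ge0; apply: integral_ge0 => v _; exact: marginal_kernel_ge0.
- by move=> y _; exact: integral_ge0.
- exact: measurable_funTS measurable_integral_density_u_gt0.
apply: eq_integral => y _; rewrite integral_density_u_gt0 /cond_pdf mulrAC EFinM -!muleA.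
by congr (_ * _); rewrite [RHS]muleC -muleA.
Qed.

Section joint_law.
Variables (d : measure_display) (T : measurableType d) (P : probability T R)
  (Y U : T -> R) (c : R).
Hypotheses (c_gt0 : (0 < c)%R) (mU : measurable_fun setT U)
  (YU_law : forall B : set (R * R), measurable B ->
     P ((fun t => (Y t, U t)) @^-1` B) =
     \int[mu \x mu]_(p in B) (c * g (Q p.1 p.2))%:E).

Let prob_YU_setX (A B : set R) : measurable A -> measurable B ->
  P ((fun t => (Y t, U t)) @^-1` (A `*` B)) =
  c%:E * \int[mu \x mu]_(p in A `*` B) (g (Q p.1 p.2))%:E.
Proof.
move=> mA mB; have mAB := measurableX mA mB.
rewrite YU_law //; under eq_integral do rewrite EFinM.
by rewrite ge0_integralZl_EFin ?ltW //; exact: measurable_funTS measurable_density.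
Qed.

Lemma prob_Y_in_U_gt0 (A : set R) : measurable A ->
  P (Y @^-1` A `&` [set t | 0 < U t]%R) =
  c%:E * \int[mu]_(y in A) \int[mu]_(u in `]0%R, +oo[) (g (Q y u))%:E.
Proof.
move=> mA.
have -> : Y @^-1` A `&` [set t | 0 < U t]%R =
    (fun t => (Y t, U t)) @^-1` (A `*` `]0%R, +oo[).
  by apply/seteqP; split => t /=; rewrite in_itv /= andbT.
by rewrite prob_YU_setX // ge0_integral_setX1 //; exact: measurable_density.
Qed.

Lemma prob_U_gt0 : P [set t | 0 < U t]%R =
  (c * (sigma / rho))%:E * \int[mu]_(v in `](- mu2)%R, +oo[) marginal_kernel v.
Proof.
have -> : [set t | 0 < U t]%R = (fun t => (Y t, U t)) @^-1` (setT `*` `]0%R, +oo[).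
  by apply/seteqP; split => t /=; rewrite in_itv /= andbT //; case.
rewrite prob_YU_setX // ge0_integral_setX2 //; last exact: measurable_density.
under eq_integral do rewrite integral_density_y.
have mK : measurable_fun setT (fun u : R => marginal_kernel (u - mu2)%R).
  by apply: measurableT_comp measurable_marginal_kernel _; solve_measurable_arith.
rewrite ge0_integralZl_EFin ?divr_ge0 ?ltW //; last 2 first.
- by move=> u _; exact: marginal_kernel_ge0.
- exact: measurable_funTS.
rewrite muleA -EFinM -[in RHS](sub0r mu2); congr (_ * _).
apply: ge0_integral_itvy_shift; first exact: measurable_marginal_kernel.
exact: marginal_kernel_ge0.
Qed.

Lemma integral_marginal_kernel_fin_gt0 : (0 < P [set t | 0 < U t]%R) ->
  exists2 D : R, (0 < D)%R & \int[mu]_(v in `](- mu2)%R, +oo[) marginal_kernel v = D%:E.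
Proof.
have mU_gt0 : measurable [set t | 0 < U t]%R.
  have -> : [set t | 0 < U t]%R = U @^-1` `]0%R, +oo[.
    by apply/seteqP; split => t /=; rewrite in_itv /= andbT.
  by rewrite -[X in measurable X]setTI; exact: mU.
have k_gt0 : (0 < c * (sigma / rho))%R by rewrite mulr_gt0 ?divr_gt0.
move: (probability_le1 P mU_gt0); rewrite prob_U_gt0.
case: (\int[mu]_(v in _) _) => [D | |] PU_le1 PU_gt0.
- by exists D => //; rewrite -(pmulr_rgt0 _ k_gt0) -lte_fin EFinM.
- by move: PU_le1; rewrite gt0_muley ?lte_fin.
- by move: PU_gt0; rewrite gt0_muleNy ?lte_fin.
Qed.

End joint_law.
End conditional_density.

Theorem corollary3 (R : realType) (g : R -> R)
  (mu1 mu2 sigma rho : R)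
  (d : measure_display) (T : measurableType d) (P : probability T R)
  (Y U : T -> R) :
  measurable_fun `[(0:R)%R, +oo[%classic g ->
  (forall u : R, 0 <= u -> 0 <= g u) ->
  (0 < \int[@lebesgue_measure R]_(u in `[(0:R)%R, +oo[%classic) (g u)%:E)%E ->
  (\int[@lebesgue_measure R]_(u in `[(0:R)%R, +oo[%classic) (g u)%:E < +oo)%E ->
  0 < sigma -> 0 < rho -> rho < 1 ->
  measurable_fun setT Y -> measurable_fun setT U ->
  (forall B : set (R * R), measurable B ->
     P ((fun t => (Y t, U t)) @^-1` B) =
     (\int[(@lebesgue_measure R \x @lebesgue_measure R)%E]_(p in B)
        (biv_sym_pdf g
           (fine (\int[@lebesgue_measure R]_(u in `[(0:R)%R, +oo[%classic) (g u)%:E))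
           (mu1, mu2) sigma rho p)%:E)%E) ->
  (0 < P [set t | (0 < U t)%R])%E ->
  forall A : set R, measurable A ->
    (P (Y @^-1` A `&` [set t | (0 < U t)%R]) / P [set t | (0 < U t)%R] =
     \int[@lebesgue_measure R]_(y in A) cond_pdf g mu1 mu2 sigma rho y)%E.
Proof.
move=> mg g_ge0 K_gt0 K_fin sigma_gt0 rho_gt0 rho_lt1 _ mU YU_pdf PU_gt0 A mA.
set K := fine _ in YU_pdf.
have {}K_gt0 : 0 < K by apply: fine_gt0; rewrite K_gt0 K_fin.
have rho2_lt1 : rho ^+ 2 < 1 by rewrite expr2 mulr_ilt1 // ltW.
pose c := (sigma * Num.sqrt (1 - rho ^+ 2) * pi * K)^-1.
have c_gt0 : 0 < c by rewrite invr_gt0 !mulr_gt0 ?pi_gt0 // sqrtr_gt0 subr_gt0.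
have YU_law B : measurable B -> P ((fun t => (Y t, U t)) @^-1` B) =
    (\int[lebesgue_measure \x lebesgue_measure]_(p in B)
       (c * g (std_qform mu1 mu2 sigma rho p.1 p.2))%:E)%E.
  by move=> mB; rewrite YU_pdf //; apply: eq_integral => p _; rewrite biv_sym_pdfE.
have [D D_gt0 DE] := integral_marginal_kernel_fin_gt0 mg g_ge0 sigma_gt0 rho_gt0 rho_lt1
  c_gt0 mU YU_law PU_gt0.
rewrite (prob_Y_in_U_gt0 mg g_ge0 rho_gt0 rho_lt1 c_gt0 YU_law mA).
rewrite (prob_U_gt0 mg g_ge0 sigma_gt0 rho_gt0 rho_lt1 c_gt0 YU_law).
rewrite (integral_cond_pdf mu1 mu2 mg g_ge0 sigma_gt0 rho_gt0 rho_lt1 mA) DE.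
have k_gt0 := mulr_gt0 (mulr_gt0 c_gt0 (divr_gt0 sigma_gt0 rho_gt0)) D_gt0.
rewrite -EFinM !inver (gt_eqF k_gt0) (gt_eqF D_gt0) muleC muleA -!EFinM.
by congr (_ * _)%E; congr EFin; field; rewrite !gt_eqF.
Qed.
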